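(* Let $n\ge1$ and $k\ge1$ be integers. (i) If $k=1$, then $f_n(\{n-k\})=2^{n-1}$ and $f_n(\{k\})=2^{n-1}$. (ii) If $k>1$ and $n\le k+1$, then $f_n(\{n-k\})=2^{n-1}$ and $f_n(\{k\})=2^{n-1}$. (iii) If $k>1$ and $n>k+1$, then $f_n(\{n-k\})=5\cdot2^{n-3}-2^{n-k-2}$ and $f_n(\{k\})=5\cdot2^{n-3}-2^{k-2}$.
   Context: For $m\ge1$ and a set $B$ of integers, $f_m(B)$ denotes the number of linear orders $q$ on $[m]$ such that for every triple $i<j<k$ in $[m]$: if $j\in B$ then $i$ is not ranked last among $\{i,j,k\}$ in $q$, and if $j\notin B$ then $k$ is not ranked first among $\{i,j,k\}$ in $q$ (only elements of $B\cap\{2,\dots,m-1\}$ matter). *)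

From mathcomp Require Import all_boot all_order all_algebra all_fingroup.
Set Implicit Arguments. Unset Strict Implicit. Unset Printing Implicit Defensive.

(* The element x : 'I_m represents the integer x+1 of [m] = {1,...,m}.
   A linear order on [m] is represented by a permutation q : 'S_m, where
   q x is the position (rank) of x; x is ranked before y iff q x < q y.
   "ranked last among {i,j,k}" = largest position; "ranked first" = smallest. *)

Definition elt (m : nat) (x : 'I_m) : int := Posz x.+1.

Definition good_triple (m : nat) (B : pred int) (q : 'S_m) (i j k : 'I_m) : bool :=
  if B (elt j) then ~~ ((q j < q i) && (q k < q i))
  else ~~ ((q k < q i) && (q k < q j)).

Definition f (m : nat) (B : pred int) : nat :=
  #|[set q : 'S_m | [forall i : 'I_m, forall j : 'I_m, forall k : 'I_m,
        ((i < j) && (j < k)) ==> good_triple B q i j k]]|.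

(* Let beta be the special middle element.  An admissible order on [m+1] arises
   from one on [m] by inserting the new largest element m+1, and the only new
   triples (i, j, m+1) leave it three possible places: last; second to last,
   unless the last element x satisfies x < beta < m+1; third to last, only if the
   order ends with an element smaller than beta followed by beta.  While
   m+1 <= beta every order thus has exactly two extensions, and the same rule
   gives f(beta+1) = 2^beta.  From then on every admissible order ends with an
   element >= beta, and those ending with (something < beta, beta) are exactly
   the 2^(beta-2) orders of [beta-1] with beta appended, so
   f(m+1) = 2 f(m) + 2^(beta-2), i.e. f(m) = 5 2^(m-3) - 2^(beta-2). *)

From mathcomp Require Import all_boot all_order all_algebra all_fingroup zify.
Set Implicit Arguments. Unset Strict Implicit. Unset Printing Implicit Defensive.

Lemma expn_pred m n : 0 < n -> m ^ n = m * m ^ n.-1.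
Proof. by move=> n_gt0; rewrite -expnS prednK. Qed.

Lemma ltn_lift n (p : 'I_n.+1) (x y : 'I_n) : (lift p x < lift p y) = (x < y).
Proof. rewrite /= /bump; case: (leqP p x); case: (leqP p y) => /= *; lia. Qed.

Lemma ltn_lift_self n (p : 'I_n.+1) (x : 'I_n) : (p < lift p x) = (p <= x).
Proof. rewrite /= /bump; case: (leqP p x) => /= *; lia. Qed.

Lemma lift_perm_max_bij m :
  bijective (fun ps : 'I_m.+1 * 'S_m => lift_perm ord_max ps.1 ps.2).
Proof.
apply: inj_card_bij; last by rewrite card_prod !card_Sn card_ord.
move=> [p s] [p' s'] /= eq_q.
have eq_p : p = p' by rewrite -(lift_perm_id ord_max p s) eq_q lift_perm_id.
subst p'; congr pair; apply/permP => x; apply: (@lift_inj _ p).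
by rewrite -!(lift_perm_lift ord_max) eq_q.
Qed.

(* [lift_perm ord_max p s] is the order [s] with the new largest element inserted
   at rank [p]. *)
Lemma sum_lift_perm m (F : 'S_m.+1 -> nat) :
  \sum_(q : 'S_m.+1) F q = \sum_(s : 'S_m) \sum_(p < m.+1) F (lift_perm ord_max p s).
Proof.
rewrite (reindex _ (onW_bij _ (lift_perm_max_bij m))) /=.
rewrite -(pair_big predT predT (fun p s => F (lift_perm ord_max p s))) /=.
exact: exchange_big.
Qed.

(* The elements ranked last and second to last; for n = 0 they coincide. *)
Definition top n (s : 'S_n.+1) : 'I_n.+1 := (s^-1)%g ord_max.
Definition subtop n (s : 'S_n.+1) : 'I_n.+1 := (s^-1)%g (inord n.-1).

Lemma top_rank n (s : 'S_n.+1) : s (top s) = ord_max.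
Proof. exact: permKV. Qed.

Lemma subtop_rank n (s : 'S_n.+1) : s (subtop s) = n.-1 :> nat.
Proof. by rewrite /subtop permKV inordK // ltnS leq_pred. Qed.

Lemma topE n (s : 'S_n.+1) x : s x = n :> nat -> top s = x.
Proof. by move=> sx; rewrite /top (_ : ord_max = s x) ?permK //; apply: val_inj. Qed.

Lemma subtopE n (s : 'S_n.+1) x : s x = n.-1 :> nat -> subtop s = x.
Proof.
move=> sx; rewrite /subtop (_ : inord n.-1 = s x) ?permK //.
by apply: val_inj; rewrite /= inordK // ltnS leq_pred.
Qed.

Lemma top_lift_max n (s : 'S_n.+1) : top (lift_perm ord_max ord_max s) = ord_max.
Proof. by apply: topE; rewrite lift_perm_id. Qed.

Lemma subtop_lift_max n (s : 'S_n.+1) :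
  subtop (lift_perm ord_max ord_max s) = lift ord_max (top s).
Proof. by apply: subtopE; rewrite lift_perm_lift top_rank lift_max. Qed.

Lemma top_lift n (s : 'S_n.+1) (p : 'I_n.+2) :
  p <= n -> top (lift_perm ord_max p s) = lift ord_max (top s).
Proof. by move=> pn; apply: topE; rewrite lift_perm_lift top_rank /= /bump pn. Qed.

Lemma subtop_lift_penult n (s : 'S_n.+1) : subtop (lift_perm ord_max (inord n) s) = ord_max.
Proof. by apply: subtopE; rewrite lift_perm_id inordK. Qed.

Lemma subtop_lift_antepenult n (s : 'S_n.+2) :
  subtop (lift_perm ord_max (inord n) s) = lift ord_max (subtop s).
Proof.
apply: subtopE; rewrite lift_perm_lift /= /bump subtop_rank inordK //=; lia.
Qed.

Section Admissible.

(* The special middle element is the integer b+1, i.e. the index b of 'I_m. *)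
Variable b : nat.

Definition admissible m (q : 'S_m) : bool :=
  [forall i : 'I_m, forall j : 'I_m, forall k : 'I_m, (i < j < k) ==>
     if j == b :> nat then ~~ ((q j < q i) && (q k < q i))
     else ~~ ((q k < q i) && (q k < q j))].

Definition insertable m (s : 'S_m) (p : 'I_m.+1) : bool :=
  [forall i : 'I_m, forall j : 'I_m, (i < j) ==>
     if j == b :> nat then ~~ ((s j < s i) && (p <= s i))
     else ~~ ((p <= s i) && (p <= s j))].

Lemma admissibleP m (q : 'S_m) :
  reflect (forall i j k : 'I_m, i < j -> j < k ->
             if j == b :> nat then ~~ ((q j < q i) && (q k < q i))
             else ~~ ((q k < q i) && (q k < q j)))
          (admissible q).
Proof.
apply: (iffP forallP) => [H i j k ij jk | H i].
  by move/forallP/(_ j)/forallP/(_ k)/implyP: (H i); apply; rewrite ij.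
by apply/forallP => j; apply/forallP => k; apply/implyP => /andP[]; apply: H.
Qed.

Lemma insertableP m (s : 'S_m) (p : 'I_m.+1) :
  reflect (forall i j : 'I_m, i < j ->
             if j == b :> nat then ~~ ((s j < s i) && (p <= s i))
             else ~~ ((p <= s i) && (p <= s j)))
          (insertable s p).
Proof.
apply: (iffP forallP) => [H i j ij | H i].
  by move/forallP/(_ j)/implyP: (H i); apply.
by apply/forallP => j; apply/implyP; apply: H.
Qed.

Lemma admissible_lift m (s : 'S_m) (p : 'I_m.+1) :
  admissible (lift_perm ord_max p s) = admissible s && insertable s p.
Proof.
pose q := lift_perm ord_max p s.
have ltn_q x y : (q (lift ord_max x) < q (lift ord_max y)) = (s x < s y).
  by rewrite !lift_perm_lift ltn_lift.
have ltn_qmax x : (q ord_max < q (lift ord_max x)) = (p <= s x).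
  by rewrite lift_perm_id lift_perm_lift ltn_lift_self.
apply/admissibleP/andP => [H | [/admissibleP Hs /insertableP Hp] i j k ij jk].
  split; [apply/admissibleP => i j k ij jk | apply/insertableP => i j ij].
    by have := H (lift ord_max i) (lift ord_max j) (lift ord_max k);
      rewrite !ltn_lift !ltn_q lift_max; apply.
  have := H (lift ord_max i) (lift ord_max j) ord_max.
  by rewrite ltn_lift !ltn_q !ltn_qmax lift_max; apply=> //; rewrite lift_max ltn_ord.
move: ij jk.
have [i' -> | ->] := unliftP ord_max i; last by rewrite ltnNge leq_ord.
have [j' -> | ->] := unliftP ord_max j; last by move=> _; rewrite ltnNge leq_ord.
rewrite ltn_lift lift_max !ltn_q => ij.
have [k' -> | ->] := unliftP ord_max k; last by rewrite !ltn_qmax => _; apply: Hp.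
by rewrite lift_max !ltn_q; apply: Hs.
Qed.

Lemma rank_topE n (s : 'S_n.+1) x : (s x == n :> nat) = (x == top s).
Proof. by apply/eqP/eqP => [/topE -> | ->] //; rewrite top_rank. Qed.

Lemma rank_subtopE n (s : 'S_n.+1) x : (s x == n.-1 :> nat) = (x == subtop s).
Proof. by apply/eqP/eqP => [/subtopE -> | ->] //; rewrite subtop_rank. Qed.

Lemma top_of_rank n (s : 'S_n.+1) x : n <= s x -> x = top s.
Proof. by move=> n_sx; apply/eqP; rewrite -rank_topE eqn_leq n_sx andbT -ltnS ltn_ord. Qed.

Lemma top2_of_rank n (s : 'S_n.+2) x : n <= s x -> x = top s \/ x = subtop s.
Proof.
move=> n_sx; case: (ltngtP n (s x)) => [n_lt_sx | sx_lt_n | n_eq_sx].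
- by left; apply: top_of_rank.
- by rewrite ltnNge n_sx in sx_lt_n.
- by right; apply/eqP; rewrite -rank_subtopE -n_eq_sx.
Qed.

Lemma insertable_max m (s : 'S_m) : insertable s ord_max.
Proof.
apply/insertableP => i j _ /=; rewrite !(leqNgt m) !ltn_ord.
by case: ifP; rewrite ?andbF.
Qed.

Lemma insertable_penult n (s : 'S_n.+1) : insertable s (inord n) = ~~ (top s < b <= n).
Proof.
have p_n : (inord n : 'I_n.+2) = n :> nat by rewrite inordK.
apply/insertableP/idP => [H | Hb i j ij].
  apply/negP => /andP [top_b b_n].
  have := H (top s) (Ordinal (b_n : b < n.+1)) top_b.
  rewrite /= eqxx top_rank p_n leqnn andbT -leqNgt => /top_of_rank top_eq.
  by move: top_b; rewrite -top_eq ltnn.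
rewrite p_n; case: ifP => [/eqP j_b | _]; apply/negP.
  case/andP => _ /top_of_rank i_top.
  by move: Hb; rewrite -i_top -j_b ij -ltnS ltn_ord.
case/andP => /top_of_rank i_top /top_of_rank j_top.
by move: ij; rewrite i_top j_top ltnn.
Qed.

Lemma insertable_antepenult n (s : 'S_n.+2) :
  insertable s (inord n) = (top s == b :> nat) && (subtop s < b).
Proof.
have p_n : (inord n : 'I_n.+3) = n :> nat by rewrite inordK //; lia.
have rank_t : s (top s) = n.+1 :> nat by rewrite top_rank.
have rank_u : s (subtop s) = n :> nat by rewrite subtop_rank.
apply/insertableP/andP => [H | [/eqP t_b u_b] i j ij].
  rewrite p_n in H; have u_t : subtop s < top s.
    case: (ltngtP (top s) (subtop s)) => [t_u | // | t_u].
      by have := H _ _ t_u; rewrite rank_t rank_u; case: ifP => _; lia.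
    by move: rank_t; rewrite (val_inj t_u) rank_u; lia.
  have := H _ _ u_t; case: eqP => [t_b _ | _]; last by rewrite rank_t rank_u; lia.
  by split; rewrite // -t_b.
rewrite p_n; case: ifP => [/eqP j_b | j_b]; apply/negP.
  case/andP => sj_si /top2_of_rank i_tu.
  have j_t : j = top s by apply: val_inj; rewrite /= j_b t_b.
  move: ij sj_si; rewrite j_t; case: i_tu => ->; first by rewrite ltnn.
  by rewrite rank_t rank_u; lia.
case/andP => /top2_of_rank i_tu /top2_of_rank j_tu.
case: j_tu => j_eq; first by rewrite j_eq t_b eqxx in j_b.
by move: ij; rewrite j_eq; case: i_tu => ->; lia.
Qed.

Lemma insertable_maxn m (s : 'S_m) p x y :
  insertable s p -> x != y -> p <= s x -> p <= s y -> maxn x y = b.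
Proof.
move=> /insertableP H x_y p_x p_y.
case: (ltngtP x y) => [lt | gt | /val_inj eq]; last by rewrite eq eqxx in x_y.
  by move: (H x y lt); case: eqP => [-> // | _]; rewrite p_x p_y.
by move: (H y x gt); case: eqP => [-> // | _]; rewrite p_x p_y.
Qed.

Lemma insertable_low n (s : 'S_n.+1) (p : 'I_n.+2) : p.+2 <= n -> ~~ insertable s p.
Proof.
move=> p_n; apply/negP => H.
pose w := (s^-1)%g (inord n.-2).
have rank_w : s w = n.-2 :> nat by rewrite permKV inordK //; lia.
have rank_t : s (top s) = n :> nat by rewrite top_rank.
have rank_u : s (subtop s) = n.-1 :> nat by rewrite subtop_rank.
have maxn_b x y : s x != s y :> nat -> p <= s x -> p <= s y -> maxn x y = b.
  by move=> sx_sy; apply: insertable_maxn H _; apply: contra sx_sy => /eqP ->.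
have := maxn_b (top s) (subtop s); have := maxn_b (top s) w; have := maxn_b (subtop s) w.
have ne x y : s x != s y :> nat -> x != y :> nat.
  by apply: contra => /eqP/val_inj ->.
have := ne (top s) (subtop s); have := ne (top s) w; have := ne (subtop s) w.
rewrite rank_t rank_u rank_w; lia.
Qed.

Lemma sum_insertions n (s : 'S_n.+1) (R : nat -> nat -> bool) :
  \sum_(p < n.+2)
     (insertable s p && R (top (lift_perm ord_max p s)) (subtop (lift_perm ord_max p s)) : nat)
  = R n.+1 (top s) + (~~ (top s < b <= n) && R (top s) n.+1)
    + [&& top s == b :> nat, subtop s < b & R (top s) (subtop s)].
Proof.
rewrite (bigD1 ord_max) //= (bigD1 (inord n)) /=; last by rewrite -val_eqE /= inordK //; lia.
rewrite insertable_max top_lift_max subtop_lift_max lift_max insertable_penult.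
rewrite top_lift ?subtop_lift_penult ?lift_max ?inordK // -addnA; congr (_ + (_ + _)).
case: n s => [|n] s.
  rewrite big1 => [|p /andP [p_max p_pen]].
    by rewrite (ord1 (top s)) (ord1 (subtop s)); case: b.
  by move: p_max p_pen (ltn_ord p); rewrite -!val_eqE /= inordK //; lia.
rewrite (bigD1 (inord n)) /=; last by rewrite -!val_eqE /= !inordK //; lia.
rewrite insertable_antepenult -andbA.
rewrite top_lift ?subtop_lift_antepenult ?lift_max ?inordK //; try lia.
rewrite big1 ?addn0 // => p /andP [/andP [p_max p_pen] p_pen2].
suff /negbTE -> : ~~ insertable s p by [].
apply: insertable_low.
by move: p_max p_pen p_pen2 (ltn_ord p); rewrite -!val_eqE /= !inordK //; lia.
Qed.

Definition count m (P : pred 'S_m) : nat := \sum_(s : 'S_m) (admissible s && P s : nat).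

Definition total m := count (fun _ : 'S_m => true).
Definition high n := count (fun s : 'S_n.+1 => b <= top s).
Definition pinned n := count (fun s : 'S_n.+1 => (top s == b :> nat) && (subtop s < b)).

Lemma eq_count m (P Q : pred 'S_m) : P =1 Q -> count P = count Q.
Proof. by move=> PQ; apply: eq_bigr => s _; rewrite PQ. Qed.

Lemma count_const m c : count (fun _ : 'S_m => c) = c * total m.
Proof. by case: c; rewrite ?mul1n // mul0n; apply: big1 => s _; rewrite andbF. Qed.

Lemma count_false m (P : pred 'S_m) : P =1 xpred0 -> count P = 0.
Proof. by move=> P0; rewrite (@eq_count _ P (fun _ => false) P0) count_const. Qed.

Lemma count_insert n (R : nat -> nat -> bool) :
  count (fun q : 'S_n.+2 => R (top q) (subtop q)) =
  count (fun s : 'S_n.+1 => R n.+1 (top s))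
  + count (fun s : 'S_n.+1 => ~~ (top s < b <= n) && R (top s) n.+1)
  + count (fun s : 'S_n.+1 => [&& top s == b :> nat, subtop s < b & R (top s) (subtop s)]).
Proof.
rewrite /count sum_lift_perm -!big_split /=; apply: eq_bigr => s _.
under eq_bigr => p _ do rewrite admissible_lift -andbA.
by case: (admissible s); [apply: sum_insertions | rewrite big1].
Qed.

Lemma total_rec n :
  total n.+2 = total n.+1 + (if b <= n then high n else total n.+1) + pinned n.
Proof.
rewrite /total (count_insert n (fun _ _ => true)) /high /pinned.
congr (_ + _ + _); last by apply: eq_count => s; rewrite andbT.
by case: leqP => b_n; apply: eq_count => s; have := ltn_ord (top s); lia.
Qed.

Lemma high_rec n : high n.+1 = (b <= n.+1) * total n.+1 + high n + pinned n.
Proof.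
rewrite /high (count_insert n (fun l _ => b <= l)) -count_const /pinned.
by congr (_ + _ + _); apply: eq_count => s; have := ltn_ord (top s); lia.
Qed.

Lemma pinned_rec n : pinned n.+1 = (n.+1 == b) * total n.+1 + pinned n.
Proof.
rewrite /pinned (count_insert n (fun l u => (l == b) && (u < b))).
rewrite [X in _ + X + _]count_false ?addn0 -?count_const => [|s].
  by congr (_ + _); apply: eq_count => s; have := ltn_ord (top s); lia.
by have := ltn_ord (top s); lia.
Qed.

Lemma total1 : total 1 = 1.
Proof.
rewrite /total /count (eq_bigr (fun _ => 1)) ?sum1_card ?card_Sn // => s _.
suff -> : admissible s by [].
by apply/admissibleP => i j k; rewrite (ord1 i) (ord1 j).
Qed.

Lemma high_small n : n < b -> high n = 0.
Proof.
by move=> n_b; apply: count_false => s; have := ltn_ord (top s); lia.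
Qed.

Lemma pinned_small n : n < b \/ b = 0 -> pinned n = 0.
Proof.
by move=> n_b; apply: count_false => s; have := ltn_ord (top s); lia.
Qed.

Lemma high0 n : b = 0 -> high n = total n.+1.
Proof. by move=> b0; apply: eq_count => s; rewrite b0. Qed.

Lemma pinned_after n : 0 < b -> b <= n -> pinned n = total b.
Proof.
move=> b_gt0; elim: n => [| n IH] b_n; first by rewrite leqNgt b_gt0 in b_n.
rewrite pinned_rec; have [n_b | n_b] := eqVneq n.+1 b.
  by rewrite n_b mul1n pinned_small ?addn0 //; left; rewrite -n_b.
by rewrite mul0n add0n IH //; lia.
Qed.

Lemma high_after n : b <= n -> high n.+1 = total n.+2.
Proof. by move=> b_n; rewrite high_rec total_rec b_n (leqW b_n) mul1n. Qed.

Lemma total_double n : n < b \/ b = 0 -> total n.+2 = 2 * total n.+1.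
Proof.
move=> n_b; rewrite total_rec pinned_small // addn0 mul2n -addnn; congr (_ + _).
by case: n_b => [n_b | b0]; [rewrite leqNgt n_b | rewrite b0 high0].
Qed.

Lemma total_pow2 m : 0 < m -> m <= b.+2 \/ b = 0 -> total m = 2 ^ m.-1.
Proof.
have pow2 k : 0 < k -> k <= b.+1 \/ b = 0 -> total k = 2 ^ k.-1.
  elim: k => [// | [_ _ _ | k IH _ k_b]]; first exact: total1.
  by rewrite total_double ?IH ?expnS //; lia.
move=> m_gt0 m_b; have [m_b' | m_eq] := leqP m b.+1; first by apply: pow2 => //; left.
have [b0 | b_gt0] := posnP b; first by apply: pow2 => //; right.
have high_b : high b = total b.
  rewrite -{1}(prednK b_gt0) high_rec prednK // leqnn mul1n high_small ?pinned_small; lia.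
have -> : m = b.+2 by case: m_b; lia.
rewrite total_rec leqnn high_b pinned_after // !pow2 /= ?expnS ?(expn_pred 2 b_gt0); lia.
Qed.

Lemma total_after n : 0 < b -> b < n -> total n.+2 = 2 * total n.+1 + total b.
Proof.
move=> b_gt0 b_n; have n_gt0 : 0 < n by apply: leq_ltn_trans b_n.
have high_n : high n = total n.+1 by rewrite -(prednK n_gt0) high_after //; lia.
by rewrite total_rec (ltnW b_n) high_n pinned_after ?(ltnW b_n) // addnn mul2n.
Qed.

Lemma total_large m : 0 < b -> b.+2 <= m -> total m + 2 ^ b.-1 = 5 * 2 ^ (m - 3).
Proof.
move=> b_gt0 b_m.
have total_b : total b = 2 ^ b.-1 by rewrite total_pow2 //; left; apply/leqW/leqW.
rewrite -(subnKC b_m); elim: (m - b.+2) => [| d IH].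
  rewrite addn0 total_pow2 //=; last by left.
  rewrite expnS (expn_pred 2 b_gt0) (_ : b.+2 - 3 = b.-1); lia.
rewrite addSn in IH; rewrite addnS addSn total_after // ?total_b; last by lia.
rewrite (_ : (b.+1 + d).+2 - 3 = ((b.+1 + d).+1 - 3).+1) ?expnS; lia.
Qed.

Lemma f_total m (B : pred int) :
  (forall j : 'I_m, 0 < j -> B (elt j) = (j == b :> nat)) -> f m B = total m.
Proof.
move=> B_b; rewrite /f /total /count -sum1_card big_mkcond /=; apply: eq_bigr => q _.
rewrite inE andbT; suff -> : admissible q = [forall i : 'I_m, forall j : 'I_m, forall k : 'I_m,
    (i < j < k) ==> good_triple B q i j k] by case: ifP.
apply: eq_forallb => i; apply: eq_forallb => j; apply: eq_forallb => k.
by case/boolP: (i < j < k) => //= /andP [i_j _]; rewrite /good_triple B_b //; lia.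
Qed.

End Admissible.

Theorem proposition6 (n k : nat) (hn : 1 <= n) (hk : 1 <= k) :
  [/\ k = 1 ->
        f n (pred1 (Posz n - Posz k)%R) = 2 ^ (n - 1) /\ f n (pred1 (Posz k)) = 2 ^ (n - 1),
      1 < k -> n <= k + 1 ->
        f n (pred1 (Posz n - Posz k)%R) = 2 ^ (n - 1) /\ f n (pred1 (Posz k)) = 2 ^ (n - 1)
    & 1 < k -> k + 1 < n ->
        f n (pred1 (Posz n - Posz k)%R) = 5 * 2 ^ (n - 3) - 2 ^ (n - k - 2) /\
        f n (pred1 (Posz k)) = 5 * 2 ^ (n - 3) - 2 ^ (k - 2)].
Proof.
have [j_n_k j_k] : (forall j : 'I_n, 0 < j ->
      pred1 (Posz n - Posz k)%R (elt j) = (j == n - k - 1 :> nat)) /\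
    (forall j : 'I_n, 0 < j -> pred1 (Posz k) (elt j) = (j == k - 1 :> nat)).
  by split=> j j_gt0 /=; rewrite /elt; lia.
rewrite (f_total j_n_k) (f_total j_k).
split=> [k1 | k_gt1 n_k | k_gt1 k_n]; split; try by rewrite total_pow2 ?subn1 //; lia.
- have := total_large (b := n - k - 1) (m := n); rewrite (_ : (n - k - 1).-1 = n - k - 2); lia.
- have := total_large (b := k - 1) (m := n); rewrite (_ : (k - 1).-1 = k - 2); lia.
Qed.
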